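(* Let $\Phi_0$ be a strictly plurisubharmonic quadratic form on $\mathbf{C}^n$ and let $F$ be a holomorphic quadratic form on $\mathbf{C}^{2n}$ whose fundamental matrix $\mathcal{F}$ does not have the eigenvalues $\pm2$, and such that $\mathrm{Im}\, F|_{\Lambda_{\Phi_0}} \geq 0$. Let $\kappa_F$ be the complex linear canonical transformation $\kappa_F:(1+\frac12\mathcal{F})\rho\mapsto(1-\frac12\mathcal{F})\rho$, $\rho\in\mathbf{C}^{2n}$, and let $\Phi$ be the strictly plurisubharmonic quadratic form with $\kappa_F(\Lambda_{\Phi_0})=\Lambda_\Phi$. Then $$\Lambda_{\Phi} \cap \Lambda_{\Phi_0} = \left\{\left(1-\tfrac{1}{2} \mathcal{F}\right)\rho:\ \rho \in \Lambda_{\Phi_0},\ \mathrm{Im}\, F(\rho) = 0\right\}.$$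
   Context: The fundamental matrix of $F$ is $\mathcal{F}= \begin{pmatrix}F''_{\xi x} &F''_{\xi \xi }\\ -F''_{xx} &-F''_{x\xi }\end{pmatrix}$. For a real quadratic form $\Phi$ on $\mathbf{C}^n$, $\Lambda_{\Phi} = \{(x,\frac{2}{i}\frac{\partial \Phi}{\partial x}(x)) : x\in \mathbf{C}^n\}$. Under the stated hypotheses it is known that $\kappa_F(\Lambda_{\Phi_0})$ is of the form $\Lambda_\Phi$ for a strictly plurisubharmonic quadratic form $\Phi\le\Phi_0$. *)

From HB Require Import structures.
From mathcomp Require Import all_boot all_algebra.
From mathcomp Require Import reals.
From mathcomp.real_closed Require Import complex.

Set Implicit Arguments.
Unset Strict Implicit.
Unset Printing Implicit Defensive.

Import GRing.Theory Num.Theory.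
Local Open Scope ring_scope.

Section Defs.
Variables (R : realType) (n : nat).
Local Notation C := R[i].
Local Notation Cn := 'cV[C]_n.

Definition polar (Phi : Cn -> R) (x y : Cn) : R := Phi (x + y) - Phi x - Phi y.

Definition real_quadratic_form (Phi : Cn -> R) : Prop :=
  [/\ forall (t : R) (x : Cn), Phi (t%:C%C *: x) = t ^+ 2 * Phi x,
      forall x y z : Cn, polar Phi (x + y) z = polar Phi x z + polar Phi y z
    & forall (t : R) (x y : Cn), polar Phi (t%:C%C *: x) y = t * polar Phi x y].

Definition evec (k : 'I_n) : Cn := delta_mx k 0.

(* real directional derivative of a real-valued function at x in direction v;
   the symmetric difference quotient with step 1, which is EXACTLY the
   derivative for (real) quadratic forms and real-linear maps *)
Definition dirder (Phi : Cn -> R) (x v : Cn) : R :=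
  (Phi (x + v) - Phi (x - v)) / 2.

Definition dirderC (g : Cn -> C) (x v : Cn) : C := (g (x + v) - g (x - v)) / 2.

(* Wirtinger derivative  d Phi / d x_k  = 1/2 (d/da_k - i d/db_k),  x_k = a_k + i b_k *)
Definition dz (Phi : Cn -> R) (x : Cn) (k : 'I_n) : C :=
  ((dirder Phi x (evec k))%:C%C - 'i%C * (dirder Phi x ('i%C *: evec k))%:C%C) / 2.

Definition dzbar (g : Cn -> C) (x : Cn) (k : 'I_n) : C :=
  (dirderC g x (evec k) + 'i%C * dirderC g x ('i%C *: evec k)) / 2.

(* Levi matrix  d^2 Phi / (d x_j d xbar_k)  (constant for quadratic Phi) *)
Definition levi (Phi : Cn -> R) (j k : 'I_n) : C :=
  dzbar (fun x => dz Phi x j) 0 k.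

Definition strictly_psh_qf (Phi : Cn -> R) : Prop :=
  real_quadratic_form Phi /\
  forall v : Cn, v != 0 ->
    0 < \sum_(j < n) \sum_(k < n) levi Phi j k * v j 0 * conjc (v k 0).

Definition Lambda (Phi : Cn -> R) (rho : 'cV[C]_(n + n)) : Prop :=
  exists x : Cn, rho = col_mx x (\col_k (2 / 'i%C * dz Phi x k)).

(* holomorphic quadratic form on C^{2n} with (symmetric) Hessian M:
   F(rho) = 1/2 rho^T M rho *)
Definition holF (M : 'M[C]_(n + n)) (rho : 'cV[C]_(n + n)) : C :=
  2^-1 * (rho^T *m M *m rho) 0 0.

(* fundamental matrix  ( F''_{xi x}  F''_{xi xi} ; -F''_{xx}  -F''_{x xi} ),
   with rho = (x, xi), x the first n coordinates *)
Definition fundmx (M : 'M[C]_(n + n)) : 'M[C]_(n + n) :=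
  block_mx (dlsubmx M) (drsubmx M) (- ulsubmx M) (- ursubmx M).

Definition kappa (M : 'M[C]_(n + n)) (rho : 'cV[C]_(n + n)) : 'cV[C]_(n + n) :=
  ((1%:M - 2^-1 *: fundmx M) *m invmx (1%:M + 2^-1 *: fundmx M)) *m rho.

End Defs.

From HB Require Import structures.
From mathcomp Require Import all_boot all_algebra.
From mathcomp Require Import reals.
From mathcomp.real_closed Require Import complex.
From mathcomp Require Import all_order ring lra.

(* Let sigma((x, xi), (y, eta)) = xi.y - x.eta be the complex symplectic form,
   so that rho^T M tau = sigma(rho, F tau) for the fundamental matrix F.  For a
   real quadratic form Phi, the space Lambda_Phi is a real subspace which is
   Lagrangian for Im sigma: Im sigma vanishes on it, and any tau with
   Im sigma(v, tau) = 0 for all v in Lambda_Phi lies in Lambda_Phi.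
   Writing rho0 = (1 + F/2) r and rho = (1 - F/2) r, both points lie in
   Lambda_Phi0 iff r and F r do.  In that case Im F(r) = Im sigma(r, F r) / 2 = 0.
   Conversely, if Im F(r) = 0 then r minimises Im F >= 0 on Lambda_Phi0, so the
   derivative v |-> Im sigma(v, F r) vanishes on Lambda_Phi0, and maximality
   puts F r in Lambda_Phi0. *)

Set Implicit Arguments.
Unset Strict Implicit.
Unset Printing Implicit Defensive.

Import Order.TTheory GRing.Theory Num.Theory.
Local Open Scope ring_scope.

Lemma quadratic_ge0_linear_coef_eq0 (R : realFieldType) (a b : R) :
  (forall t, 0 <= t * a + t ^+ 2 * b) -> a = 0.
Proof.
move=> ge0; apply/eqP; apply: contraT => a_neq0.
have nb_gt0 : 0 < `|b| + 1 by rewrite ltr_wpDl.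
pose s := (`|b| + 1)^-1.
have s_neq0 : s != 0 by rewrite invr_eq0 gt_eqF.
have := ge0 (- a * s).
have -> : - a * s * a + (- a * s) ^+ 2 * b = (a * s) ^+ 2 * (b - `|b| - 1).
  by rewrite /s; field; rewrite gt_eqF.
rewrite pmulr_rge0; last by rewrite lt_def sqr_ge0 andbT sqrf_eq0 mulf_neq0.
by have := ler_norm b; lra.
Qed.

Lemma unitmx_add_half (F : numFieldType) m (G : 'M[F]_m) :
  ~~ eigenvalue G (-2) -> 1%:M + 2^-1 *: G \in unitmx.
Proof.
move=> not_eig.
have -> : 1%:M + 2^-1 *: G = 2^-1 *: (G - (-2)%:M).
  by rewrite scalerBr scale_scalar_mx mulrN mulVf ?pnatr_eq0 // raddfN opprK addrC.
rewrite unitmxZ ?unitfE ?invr_eq0 ?pnatr_eq0 // -row_free_unit -kermx_eq0.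
exact: negbNE.
Qed.

Definition dotmx (K : pzRingType) m (u v : 'cV[K]_m) : K := (u^T *m v) 0 0.

Lemma dotmxE (K : pzRingType) m (u v : 'cV[K]_m) : dotmx u v = \sum_k u k 0 * v k 0.
Proof. by rewrite /dotmx mxE; apply: eq_bigr => k _; rewrite mxE. Qed.

Lemma dotmxC (K : comPzRingType) m (u v : 'cV[K]_m) : dotmx u v = dotmx v u.
Proof. by rewrite !dotmxE; apply: eq_bigr => k _; rewrite mulrC. Qed.

Lemma dotmxBr (K : pzRingType) m (u v w : 'cV[K]_m) :
  dotmx u (v - w) = dotmx u v - dotmx u w.
Proof. by rewrite /dotmx mulmxBr !mxE. Qed.

Lemma dotmx_deltal (K : pzRingType) m (c : K) k (w : 'cV[K]_m) :
  dotmx (c *: delta_mx k 0) w = c * w k 0.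
Proof.
rewrite dotmxE (bigD1 k) //= big1 ?addr0 => [|j /negbTE jk]; rewrite !mxE ?jk.
  by rewrite !eqxx mulr1.
by rewrite mulr0 mul0r.
Qed.

Definition symp (K : pzRingType) m (rho tau : 'cV[K]_(m + m)) : K :=
  dotmx (dsubmx rho) (usubmx tau) - dotmx (usubmx rho) (dsubmx tau).

(* [complex.Im] is the real-valued imaginary part, whereas [Im] (from
   [Num.Theory], used in the statement) is complex-valued; [complexIm]
   relates them. *)
Section ComplexIm.
Variable R : realType.

Lemma ImcD (x y : R[i]) : complex.Im (x + y) = complex.Im x + complex.Im y.
Proof. by case: x; case: y. Qed.

Lemma ImcB (x y : R[i]) : complex.Im (x - y) = complex.Im x - complex.Im y.
Proof. by case: x; case: y. Qed.

Lemma Imc_sum m (f : 'I_m -> R[i]) : complex.Im (\sum_k f k) = \sum_k complex.Im (f k).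
Proof. exact: (big_morph _ (@ImcD) (erefl : complex.Im (0 : R[i]) = 0)). Qed.

Lemma Imc_realM (k : R) (x : R[i]) : complex.Im (k%:C%C * x) = k * complex.Im x.
Proof. by case: x => a b /=; rewrite mul0r addr0. Qed.

Lemma real_complex_half : (2^-1 : R[i]) = (2^-1 : R)%:C%C.
Proof. by rewrite fmorphV rmorph_nat. Qed.

End ComplexIm.

Section QuadraticForm.
Variables (R : realType) (n : nat) (Phi : 'cV[R[i]]_n -> R).
Hypothesis PhiQ : real_quadratic_form Phi.

Lemma polarC x y : polar Phi x y = polar Phi y x.
Proof. by rewrite /polar [x + y]addrC; lra. Qed.

Lemma polarDl x y z : polar Phi (x + y) z = polar Phi x z + polar Phi y z.
Proof. by case: PhiQ. Qed.

Lemma polarZl t x y : polar Phi (t%:C%C *: x) y = t * polar Phi x y.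
Proof. by case: PhiQ. Qed.

Lemma polarDr x y z : polar Phi x (y + z) = polar Phi x y + polar Phi x z.
Proof. by rewrite !(polarC x) polarDl. Qed.

Lemma polarZr t x y : polar Phi x (t%:C%C *: y) = t * polar Phi x y.
Proof. by rewrite !(polarC x) polarZl. Qed.

Lemma polarNr x y : polar Phi x (- y) = - polar Phi x y.
Proof. by have := polarZr (-1) x y; rewrite rmorphN1 scaleN1r mulN1r. Qed.

Lemma polar_sumr x m (f : 'I_m -> 'cV[R[i]]_n) :
  polar Phi x (\sum_k f k) = \sum_k polar Phi x (f k).
Proof.
apply: big_morph => [y z|]; first exact: polarDr.
by have := polarZr 0 x 0; rewrite rmorph0 scale0r mul0r.
Qed.

Lemma quadratic_formN x : Phi (- x) = Phi x.
Proof.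
case: PhiQ => homog _ _.
by have := homog (-1) x; rewrite rmorphN1 scaleN1r sqrrN expr1n mul1r.
Qed.

Lemma dirder_polar x v : dirder Phi x v = polar Phi x v.
Proof.
have plus : Phi (x + v) = Phi x + Phi v + polar Phi x v by rewrite /polar; lra.
have minus : Phi (x - v) = Phi x + Phi v - polar Phi x v.
  by rewrite -[Phi v](quadratic_formN v) -polarNr /polar; lra.
by rewrite /dirder plus minus; field.
Qed.

Definition xi_Lambda (x : 'cV[R[i]]_n) : 'cV[R[i]]_n := \col_k (2 / 'i%C * dz Phi x k).

Lemma xi_LambdaE x k :
  xi_Lambda x k 0 =
  (- polar Phi x ('i%C *: evec R k) +i* - polar Phi x (evec R k))%C.
Proof.
rewrite mxE /dz !dirder_polar; simpc.
by congr (Complex _ _); rewrite /polar; field.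
Qed.

Lemma xi_LambdaD x y : xi_Lambda (x + y) = xi_Lambda x + xi_Lambda y.
Proof.
by apply/matrixP => k j; rewrite ord1 [RHS]mxE !xi_LambdaE !polarDl; simpc.
Qed.

Lemma xi_LambdaZ t x : xi_Lambda (t%:C%C *: x) = t%:C%C *: xi_Lambda x.
Proof.
by apply/matrixP => k j; rewrite ord1 [RHS]mxE !xi_LambdaE !polarZl -complexr0; simpc.
Qed.

Lemma Im_dotmx_xi_Lambda x y : complex.Im (dotmx (xi_Lambda x) y) = - polar Phi x y.
Proof.
rewrite dotmxE Imc_sum {2}[y]matrix_sum_delta polar_sumr -sumrN.
apply: eq_bigr => k _; rewrite big_ord1 xi_LambdaE; case: (y k 0) => c d.
have -> : (c +i* d)%C *: evec R k = c%:C%C *: evec R k + d%:C%C *: ('i%C *: evec R k).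
  by rewrite scalerA -scalerDl -!complexr0; congr (_ *: _); simpc.
by rewrite polarDr !polarZr; simpc => /=; lra.
Qed.

Lemma Im_dotmx_nondeg (w : 'cV[R[i]]_n) :
  (forall z, complex.Im (dotmx z w) = 0) -> w = 0.
Proof.
move=> Im0; apply/matrixP => k j; rewrite ord1 [RHS]mxE.
have := Im0 (1 *: evec R k); have := Im0 ('i%C *: evec R k).
rewrite /evec !dotmx_deltal mul1r.
by case: (w k 0) => a b /=; rewrite mul0r mul1r add0r => -> ->.
Qed.

Lemma LambdaP rho : Lambda Phi rho <-> dsubmx rho = xi_Lambda (usubmx rho).
Proof.
split=> [[x ->]|rhoE]; first by rewrite col_mxKu col_mxKd.
by exists (usubmx rho); rewrite -[LHS]vsubmxK rhoE.
Qed.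

Lemma Lambda_col_mx x : Lambda Phi (col_mx x (xi_Lambda x)).
Proof. by exists x. Qed.

Lemma LambdaD r1 r2 : Lambda Phi r1 -> Lambda Phi r2 -> Lambda Phi (r1 + r2).
Proof.
move=> [x1 ->] [x2 ->]; exists (x1 + x2); rewrite add_col_mx.
by congr col_mx; exact: (esym (xi_LambdaD x1 x2)).
Qed.

Lemma LambdaZ t r : Lambda Phi r -> Lambda Phi (t%:C%C *: r).
Proof.
move=> [x ->]; exists (t%:C%C *: x); rewrite scale_col_mx.
by congr col_mx; exact: (esym (xi_LambdaZ t x)).
Qed.

Lemma LambdaB r1 r2 : Lambda Phi r1 -> Lambda Phi r2 -> Lambda Phi (r1 - r2).
Proof.
by move=> L1 /(LambdaZ (-1)); rewrite rmorphN1 scaleN1r; apply: LambdaD.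
Qed.

Lemma Lambda_half_cayleyP (G : 'M[R[i]]_(n + n)) r :
  Lambda Phi ((1%:M + 2^-1 *: G) *m r) /\ Lambda Phi ((1%:M - 2^-1 *: G) *m r) <->
  Lambda Phi r /\ Lambda Phi (G *m r).
Proof.
have halves : (2^-1 : R[i]) + 2^-1 = 1 by field.
rewrite mulmxDl mulmxBl mul1mx -scalemxAl; set h := 2^-1 *: (G *m r).
have rE : r = 2^-1 *: ((r + h) + (r - h)).
  by rewrite addrACA subrr addr0 scalerDr -scalerDl halves scale1r.
have GrE : G *m r = (r + h) - (r - h).
  by rewrite opprB addrC addrA subrK -scalerDl halves scale1r.
split=> [[Lp Lm]|[Lr LGr]].
  rewrite GrE {1}rE real_complex_half.
  by split; [apply: LambdaZ; apply: LambdaD|apply: LambdaB].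
have Lh : Lambda Phi h by rewrite /h real_complex_half; apply: LambdaZ.
by split; [apply: LambdaD|apply: LambdaB].
Qed.

Lemma Im_symp_Lambda rho tau :
  Lambda Phi rho -> Lambda Phi tau -> complex.Im (symp rho tau) = 0.
Proof.
move=> /LambdaP rhoE /LambdaP tauE.
rewrite /symp rhoE tauE ImcB [dotmx (usubmx rho) _]dotmxC.
by rewrite !Im_dotmx_xi_Lambda polarC subrr.
Qed.

Lemma Lambda_of_Im_symp tau :
  (forall v, Lambda Phi v -> complex.Im (symp v tau) = 0) -> Lambda Phi tau.
Proof.
move=> Im0; apply/LambdaP/eqP; rewrite -subr_eq0; apply/eqP.
apply: Im_dotmx_nondeg => z; have := Im0 _ (Lambda_col_mx z).
rewrite /symp col_mxKu col_mxKd dotmxBr !ImcB [dotmx z (xi_Lambda _)]dotmxC.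
by rewrite !Im_dotmx_xi_Lambda polarC; lra.
Qed.

End QuadraticForm.

Lemma mulmx_fundmx (R : realType) n (M : 'M[R[i]]_(n + n)) rho tau :
  (rho^T *m M *m tau) 0 0 = symp rho (fundmx M *m tau).
Proof.
rewrite /symp /fundmx -[M]submxK -[rho]vsubmxK -[tau]vsubmxK.
rewrite !(block_mxKul, block_mxKur, block_mxKdl, block_mxKdr, col_mxKu, col_mxKd).
move: (ulsubmx M) (ursubmx M) (dlsubmx M) (drsubmx M) => A B C D.
move: (usubmx rho) (dsubmx rho) (usubmx tau) (dsubmx tau) => x xi y eta.
rewrite mul_block_col col_mxKu col_mxKd tr_col_mx mul_row_block mul_row_col.
have entryB (P Q : 'M[R[i]]_1) : P 0 0 - Q 0 0 = (P - Q) 0 0 by rewrite !mxE.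
rewrite /dotmx entryB; congr (_ 0 0).
rewrite !mulmxDl !mulmxDr !mulNmx !mulmxN !mulmxA opprD !opprK.
by rewrite addrACA addrC.
Qed.

Lemma holF_symp (R : realType) n (M : 'M[R[i]]_(n + n)) rho :
  holF M rho = 2^-1 * symp rho (fundmx M *m rho).
Proof. by rewrite /holF mulmx_fundmx. Qed.

Lemma holF_addZ (R : realType) n (M : 'M[R[i]]_(n + n)) r v c : M^T = M ->
  holF M (r + c *: v) = holF M r + c * symp v (fundmx M *m r) + c ^+ 2 * holF M v.
Proof.
move=> MT.
have entryT (A : 'M[R[i]]_1) : A 0 0 = A^T 0 0 by rewrite mxE.
have entryD (A B : 'M[R[i]]_1) : (A + B) 0 0 = A 0 0 + B 0 0 by rewrite mxE.
have entryZ (A : 'M[R[i]]_1) a : (a *: A) 0 0 = a * A 0 0 by rewrite mxE.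
have symM : (r^T *m M *m v) 0 0 = (v^T *m M *m r) 0 0.
  by rewrite entryT !trmx_mul trmxK MT mulmxA.
have trE : (r + c *: v)^T = r^T + c *: v^T by rewrite linearD linearZ.
rewrite /holF -mulmx_fundmx trE; move: symM; move: (r^T) (v^T) => rt vt symM.
rewrite !mulmxDl !mulmxDr -!scalemxAl -!scalemxAr !entryD !entryZ symM.
by field.
Qed.

Lemma Im_holF_eq0 (R : realType) n (Phi : 'cV[R[i]]_n -> R)
    (M : 'M[R[i]]_(n + n)) r :
  real_quadratic_form Phi -> Lambda Phi r -> Lambda Phi (fundmx M *m r) ->
  Im (holF M r) = 0.
Proof.
move=> PhiQ Lr LFr; rewrite -complexIm holF_symp real_complex_half Imc_realM.
by rewrite (Im_symp_Lambda PhiQ Lr LFr) mulr0.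
Qed.

Lemma Lambda_fundmx_of_Im_holF_eq0 (R : realType) n (Phi : 'cV[R[i]]_n -> R)
    (M : 'M[R[i]]_(n + n)) r :
  real_quadratic_form Phi -> M^T = M ->
  (forall rho, Lambda Phi rho -> 0 <= Im (holF M rho)) ->
  Lambda Phi r -> Im (holF M r) = 0 -> Lambda Phi (fundmx M *m r).
Proof.
move=> PhiQ MT ImF_ge0 Lr; rewrite -complexIm => /complexI ImFr0.
apply: Lambda_of_Im_symp => // v Lv.
apply: (quadratic_ge0_linear_coef_eq0 (b := complex.Im (holF M v))) => t.
have := ImF_ge0 _ (LambdaD PhiQ Lr (LambdaZ PhiQ t Lv)).
rewrite -complexIm ler0c holF_addZ // 2!ImcD ImFr0 add0r Imc_realM.
by rewrite -rmorphXn Imc_realM.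
Qed.

Theorem proposition2p3 (R : realType) (n : nat)
  (Phi0 Phi : 'cV[R[i]]_n -> R) (M : 'M[R[i]]_(n + n)) :
  strictly_psh_qf Phi0 ->
  M^T = M ->
  ~~ eigenvalue (fundmx M) 2 ->
  ~~ eigenvalue (fundmx M) (-2) ->
  (forall rho, Lambda Phi0 rho -> 0 <= Im (holF M rho)) ->
  strictly_psh_qf Phi ->
  (forall rho, Lambda Phi rho <-> exists rho0, Lambda Phi0 rho0 /\ rho = kappa M rho0) ->
  forall rho : 'cV[R[i]]_(n + n),
    (Lambda Phi rho /\ Lambda Phi0 rho) <->
    exists rho0, [/\ Lambda Phi0 rho0, Im (holF M rho0) = 0
                   & rho = (1%:M - 2^-1 *: fundmx M) *m rho0].
Proof.
move=> [Phi0Q _] MT _ not_eig ImF_ge0 _ LambdaE rho.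
set F := fundmx M; set Ap := 1%:M + 2^-1 *: F; set Am := 1%:M - 2^-1 *: F.
have Ap_unit : Ap \in unitmx := unitmx_add_half not_eig.
have kappaE r : kappa M (Ap *m r) = Am *m r by rewrite /kappa -mulmxA mulKmx.
split=> [[/LambdaE [rho0 [L0rho0 ->]] L0rho]|[r [L0r ImFr0 ->]]].
  pose r := invmx Ap *m rho0.
  have rho0E : rho0 = Ap *m r by rewrite /r mulKVmx.
  rewrite rho0E kappaE in L0rho L0rho0 *.
  have [L0r L0Fr] := (Lambda_half_cayleyP Phi0Q F r).1 (conj L0rho0 L0rho).
  by exists r; split=> //; apply: Im_holF_eq0 L0r L0Fr.
have L0Fr := Lambda_fundmx_of_Im_holF_eq0 Phi0Q MT ImF_ge0 L0r ImFr0.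
have [L0Apr L0Amr] := (Lambda_half_cayleyP Phi0Q F r).2 (conj L0r L0Fr).
split; last exact: L0Amr.
by apply/LambdaE; exists (Ap *m r); rewrite kappaE.
Qed.
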